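(* Let $B \ge 1$ and let $|B| \ge 2$ be an even integer. Consider the busNNN architecture with $B$ buses, each attached to $|B|$ qubits, described in the context, with its $2B$ columns $0,1,\dots,2B-1$. Apply the following alternating sequence of swap layers, starting from the initial placement (time $0$): layer type $\mathcal{S}_0$, then $\mathcal{S}_1$, then $\mathcal{S}_0$, then $\mathcal{S}_1$, and so on, where - $\mathcal{S}_0$ (inter-bus layer) swaps, position-wise, the contents of column $2i+1$ with the contents of column $2i+2$ for every $i = 0,\dots,B-2$ (i.e. it swaps the qubit states across every point-to-point inter-bus edge); - $\mathcal{S}_1$ (intra-bus layer) swaps, position-wise, the contents of column $2i$ with the contents of column $2i+1$ for every $i = 0,\dots,B-2$ (i.e. on every bus except the last, $(B-1)$-th, bus). Say that full connectivity is reached after $L$ layers if for every pair of distinct logical qubits there is a time $t \in \{0,1,\dots,L\}$ (time $t$ being the placement after the first $t$ layers) at which the two qubits sit on qubit positions attached to a common bus. Then the smallest $L$ for which full connectivity is reached is exactly $$(4B-5)\left\lceil \frac{B}{B+1} \right\rceil,$$ i.e. $0$ if $B=1$ and $4B-5$ if $B \ge 2$.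
   Context: The busNNN (''bus next-nearest neighbor'') architecture with $B$ buses and bus size $|B|$ (an even integer) has $n = B|B|$ physical qubit positions. A bus is a hardware element attached to $|B|$ qubit positions that can apply a two-qubit gate between any two of the qubit positions attached to it. The $|B|$ positions attached to bus $i$ ($i = 0,\dots,B-1$) are split into two ''columns'' (half-buses) of $|B|/2$ positions each, labeled column $2i$ and column $2i+1$; within each column the positions are indexed $k = 0,\dots,|B|/2-1$. Adjacent buses are connected by point-to-point edges: for each $i = 0,\dots,B-2$ and each $k$, position $k$ of column $2i+1$ is coupled to position $k$ of column $2i+2$. A swap layer is a set of simultaneous SWAP operations on disjoint pairs of positions; ''swapping column $a$ with column $b$ position-wise'' means swapping, for every $k$, the state at position $k$ of column $a$ with the state at position $k$ of column $b$. Logical qubits are initially placed one per position. *)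

From mathcomp Require Import all_boot.
Set Implicit Arguments. Unset Strict Implicit. Unset Printing Implicit Defensive.

(* busNNN architecture with B buses, bus size nb (even).
   A qubit position is a pair (c, k) : column c (0 <= c < 2B), index
   k (0 <= k < nb/2) within the column.  Bus of column c is c / 2. *)
Definition pos := (nat * nat)%type.

Definition is_position (B nb : nat) (p : pos) : bool :=
  (p.1 < 2 * B) && (p.2 < nb %/ 2).

Definition bus (p : pos) : nat := p.1 %/ 2.

Definition S0col (B c : nat) : nat :=
  if odd c && (c + 3 <= 2 * B) then c.+1            (* c = 2i+1, i <= B-2 *)
  else if ~~ odd c && (2 <= c) && (c + 2 <= 2 * B) then c.-1 (* c = 2i+2 *)
  else c.

Definition S1col (B c : nat) : nat :=
  if ~~ odd c && (c + 4 <= 2 * B) then c.+1          (* c = 2i, i <= B-2 *)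
  else if odd c && (c + 3 <= 2 * B) then c.-1        (* c = 2i+1 *)
  else c.

Definition S0 (B : nat) (p : pos) : pos := (S0col B p.1, p.2).
Definition S1 (B : nat) (p : pos) : pos := (S1col B p.1, p.2).

Definition layer (B j : nat) : pos -> pos := if odd j then S1 B else S0 B.

Fixpoint place (B t : nat) (q : pos) : pos :=
  match t with
  | 0 => q
  | t'.+1 => layer B t' (place B t' q)
  end.

(* Full connectivity reached after L layers (logical qubits are identified
   with their initial positions). *)
Definition full_connectivity (B nb L : nat) : Prop :=
  forall q1 q2 : pos, is_position B nb q1 -> is_position B nb q2 -> q1 <> q2 ->
    exists t, t <= L /\ bus (place B t q1) = bus (place B t q2).

From mathcomp Require Import all_boot zify.

Set Implicit Arguments.
Unset Strict Implicit.
Unset Printing Implicit Defensive.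

(* Column 2B-1 never moves.  The other 2B-1 columns form one cyclic track of
   length N = 4B-2: every qubit on it advances one column per layer, rightwards
   through columns 0, ..., 2B-2 and then back leftwards, so its column at time t
   is a function of its phase (initial phase + t) mod N.  Two moving qubits
   therefore keep their phase difference while the sum of their phases grows by
   2 per layer; as N is twice an odd number, some time t <= 4B-5 brings this
   sum to the residue that folds the two phases onto the two halves of a bus.
   A moving qubit enters the last bus within 4B-5 layers, and the one starting
   in column 2B-4 needs exactly that many, whence the lower bound. *)

Ltac case_ifs :=
  repeat (match goal with |- context[if ?c then _ else _] =>
    lazymatch c with
    | context[if _ then _ else _] => fail
    | _ => let E := fresh "E" in case E: c
    end end; cbv iota beta);
  try lia.

Lemma modn_lt_double m d : m < d.*2 -> m %% d = if m < d then m else m - d.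
Proof.
move=> lt_m2d; case: ifP => [lt_md|ge_md]; first by rewrite modn_small.
have -> : m = (m - d) + d by lia.
by rewrite modnDr modn_small; lia.
Qed.

Section Track.

Variable B : nat.
Hypothesis B_gt0 : 0 < B.

Local Notation N := (4 * B - 2).

(* Phase u < 2B-1 is column u heading right, phase u >= 2B-1 is column 4B-3-u
   heading left; odd columns start heading right, even ones heading left. *)
Definition track_col (u : nat) : nat := if u < 2 * B - 1 then u else 4 * B - 3 - u.

Definition col_phase (c : nat) : nat := if odd c then c else 4 * B - 3 - c.

Lemma place_last_col t k : place B t (2 * B - 1, k) = (2 * B - 1, k).
Proof.
elim: t => [|t IH] //=; rewrite IH /layer /S0 /S1 /S0col /S1col.
by case: (odd t) => /=; congr (_, _); case_ifs.
Qed.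

Lemma layer_track_col j u k : u < N -> odd (u + j) ->
  layer B j (track_col u, k) = (track_col (u.+1 %% N), k).
Proof.
move=> lt_uN odd_uj; rewrite modn_lt_double; last lia.
rewrite /layer /S0 /S1 /S0col /S1col /track_col.
by case odd_j: (odd j) => /=; congr (_, _); case_ifs.
Qed.

Lemma col_phase_odd c : c < 2 * B - 1 -> odd (col_phase c).
Proof. by rewrite /col_phase; case_ifs. Qed.

Lemma col_phase_lt c : c < 2 * B - 1 -> col_phase c < N.
Proof. by rewrite /col_phase; case_ifs. Qed.

Lemma col_phaseK c : c < 2 * B - 1 -> track_col (col_phase c) = c.
Proof. by rewrite /col_phase /track_col; case_ifs. Qed.

Lemma place_track c k t : c < 2 * B - 1 ->
  place B t (c, k) = (track_col ((col_phase c + t) %% N), k).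
Proof.
move=> lt_c; elim: t => [|t IH] /=.
  by rewrite addn0 modn_small ?col_phase_lt ?col_phaseK.
have N_even : odd N = false by lia.
rewrite IH layer_track_col ?ltn_mod; last 2 first.
- lia.
- by rewrite oddD odd_mod // -oddD -addnA addnn oddD odd_double col_phase_odd.
by rewrite -addn1 modnDml addn1 addnS.
Qed.

Lemma track_col_last_bus x : x < N ->
  track_col x %/ 2 = B - 1 <-> x = 2 * B - 2 \/ x = 2 * B - 1.
Proof. by rewrite /track_col; case_ifs. Qed.

(* The fold of the track puts phases summing to -2 (x even) or 0 (x odd)
   modulo N on the columns 2i and 2i+1 of one bus. *)
Lemma track_col_pair_bus x y : x < N -> y < N -> N %| x + y + (~~ odd x).*2 ->
  track_col x %/ 2 = track_col y %/ 2.
Proof.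
move=> lt_xN lt_yN /dvdnP[q def_q].
have [] : q = 1 \/ q = 2 by nia.
all: by move=> q_val; move: def_q; rewrite q_val /track_col; case_ifs.
Qed.

Lemma even_residue_shift s : ~~ odd s -> exists2 m, m < 2 * B - 1 & N %| s + 4 * m.
Proof.
move=> even_s; set r := s %% N.
suff [m lt_m r_dvd] : exists2 m, m < 2 * B - 1 & N %| r + 4 * m.
  by exists m; rewrite // /dvdn -modnDml.
have lt_rN : r < N by rewrite ltn_mod; lia.
have even_r : ~~ odd r by rewrite odd_mod //; lia.
have [-> | r_gt0] := posnP r; first by exists 0; [lia | rewrite dvdn0].
have [r_mod4 | r_mod4] : r %% 4 = 2 \/ r %% 4 = 0 by lia.
- by exists ((N - r) %/ 4); [lia | apply/dvdnP; exists 1; lia].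
- by exists ((2 * N - r) %/ 4); [lia | apply/dvdnP; exists 2; lia].
Qed.

Lemma track_phases_meet ua ub : odd ua -> odd ub ->
  exists t, t <= 4 * B - 5 /\
    track_col ((ua + t) %% N) %/ 2 = track_col ((ub + t) %% N) %/ 2.
Proof.
move=> odd_ua odd_ub.
have [m lt_m N_dvd] : exists2 m, m < 2 * B - 1 & N %| ua + ub + 4 * m.
  by apply: even_residue_shift; rewrite oddD odd_ua odd_ub.
(* After t layers the phase sum is ua + ub + 2t; t = 2m-1 makes it -2 mod N
   with even phases, and t = 0 (m = 0) makes it 0 with odd ones. *)
exists (2 * m).-1; split; first lia.
have N_even : odd N = false by lia.
apply: track_col_pair_bus; rewrite ?ltn_mod; [lia | lia |].
have mod_sum a b c : N %| a %% N + b %% N + c = (N %| a + b + c).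
  by rewrite /dvdn -modnDml modnDm modnDml.
have shift : ua + (2 * m).-1 + (ub + (2 * m).-1) + (~~ odd (ua + (2 * m).-1)).*2
             = ua + ub + 4 * m by lia.
by rewrite odd_mod // mod_sum shift.
Qed.

Lemma track_reaches_last_bus u : odd u -> u < N ->
  exists t, t <= 4 * B - 5 /\ track_col ((u + t) %% N) %/ 2 = B - 1.
Proof.
move=> odd_u lt_uN.
exists (if u <= 2 * B - 1 then 2 * B - 1 - u else 6 * B - 4 - u); split.
  by case_ifs.
rewrite track_col_last_bus ?ltn_mod ?modn_lt_double; case_ifs.
Qed.

Lemma meet_last_col c k k' : c < 2 * B ->
  exists t, t <= 4 * B - 5 /\
    bus (place B t (c, k)) = bus (place B t (2 * B - 1, k')).
Proof.
move=> lt_c; have [->|ne_c] := eqVneq c (2 * B - 1); first by exists 0; split.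
have lt_c' : c < 2 * B - 1 by lia.
have [t [le_t reach]] :=
  track_reaches_last_bus (col_phase_odd lt_c') (col_phase_lt lt_c').
exists t; split=> //; rewrite place_track // place_last_col /bus /= reach; lia.
Qed.

Lemma meet_track a b k k' : a < 2 * B - 1 -> b < 2 * B - 1 ->
  exists t, t <= 4 * B - 5 /\ bus (place B t (a, k)) = bus (place B t (b, k')).
Proof.
move=> lt_a lt_b.
have [t [le_t meet]] := track_phases_meet (col_phase_odd lt_a) (col_phase_odd lt_b).
by exists t; rewrite !place_track.
Qed.

(* Column 2B-4 starts at phase 2B+1, just past the phases 2B-2, 2B-1 of the
   last bus, so it takes N-3 layers to come round to them. *)
Lemma no_meet_last_col_early t k k' : 1 < B -> t < 4 * B - 5 ->
  bus (place B t (2 * B - 4, k)) <> bus (place B t (2 * B - 1, k')).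
Proof.
move=> B_gt1 lt_t; rewrite place_track ?place_last_col /bus /=; last lia.
have -> : col_phase (2 * B - 4) = 2 * B + 1 by rewrite /col_phase; case_ifs.
have -> : (2 * B - 1) %/ 2 = B - 1 by lia.
rewrite track_col_last_bus ?ltn_mod ?modn_lt_double; case_ifs.
Qed.

End Track.

Theorem theorem3 (B nb : nat) :
  1 <= B -> 2 <= nb -> ~~ odd nb ->
  let Lmin := (if B == 1 then 0 else 4 * B - 5) in
  full_connectivity B nb Lmin /\
  (forall L, full_connectivity B nb L -> Lmin <= L).
Proof.
move=> B_gt0 nb_ge2 _ Lmin; rewrite /Lmin.
have [->|B_neq1] := eqVneq B 1.
  split=> // [[a k] [b k']] /andP[/= lt_a _] /andP[/= lt_b _] _.
  by exists 0; split; rewrite //= /bus /=; lia.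
split=> [[a k] [b k'] /andP[/= lt_a _] /andP[/= lt_b _] _ | L full].
- have [->|ne_a] := eqVneq a (2 * B - 1).
    have [t [le_t meet]] := meet_last_col B_gt0 k' k lt_b.
    by exists t; split=> //; apply/esym.
  have [->|ne_b] := eqVneq b (2 * B - 1); first exact: meet_last_col.
  by apply: meet_track; lia.
- rewrite leqNgt; apply/negP => lt_L.
  have pos_0 c : c < 2 * B -> is_position B nb (c, 0) by rewrite /is_position /=; lia.
  have [|||t [le_t]] := full (2 * B - 4, 0) (2 * B - 1, 0).
  - by apply: pos_0; lia.
  - by apply: pos_0; lia.
  - by case; lia.
  by apply: no_meet_last_col_early; lia.
Qed.
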